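(* Fix a prompt $x$ and two responses $y_w$ (preferred) and $y_l$ (dispreferred), a constant $\beta>0$, and reference probabilities $a_0=\pi_{ref}(y_w\mid x)\in(0,1)$, $b_0=\pi_{ref}(y_l\mid x)\in(0,1)$. Regard $a=\pi_\theta(y_w\mid x)\in(0,1)$ and $b=\pi_\theta(y_l\mid x)\in(0,1)$ as independent variables and define $$\lambda_w(a,b)=\frac{\log b}{\log a+\log b},\qquad \mathcal{L}_{bdpo}(a,b)=-\log\sigma\!\Big(\beta\lambda_w(a,b)\log\frac{a}{a_0}-\beta\big(1-\lambda_w(a,b)\big)\log\frac{b}{b_0}\Big),$$ where $\sigma(t)=1/(1+e^{-t})$. Then at the point where $\pi_\theta\equiv\pi_{ref}$, i.e. at $(a,b)=(a_0,b_0)$, $$\frac{\partial \mathcal{L}_{bdpo}}{\partial \pi_\theta(y_w\mid x)}\Big/\frac{\partial \mathcal{L}_{bdpo}}{\partial \pi_\theta(y_l\mid x)}=-\frac{\pi_\theta(y_l\mid x)\log\pi_\theta(y_l\mid x)}{\pi_\theta(y_w\mid x)\log\pi_\theta(y_w\mid x)}.$$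
   Context: $\mathcal{L}_{bdpo}$ is the ''Balanced DPO'' loss for a single preference pair $(y_w\succ y_l)$ with prompt $x$; the partial derivatives are with respect to the two probabilities $a=\pi_\theta(y_w\mid x)$ and $b=\pi_\theta(y_l\mid x)$, with $\lambda_w$ also depending on them. *)

From Stdlib Require Import Reals.
From Coquelicot Require Import Coquelicot.
Open Scope R_scope.

Definition sigmoid (t : R) : R := 1 / (1 + exp (- t)).

Definition lambda_w (a b : R) : R := ln b / (ln a + ln b).

(* Balanced DPO loss as a function of a = pi_theta(y_w|x), b = pi_theta(y_l|x),
   with parameters beta, a0 = pi_ref(y_w|x), b0 = pi_ref(y_l|x). *)
Definition L_bdpo (beta a0 b0 a b : R) : R :=
  - ln (sigmoid (beta * lambda_w a b * ln (a / a0)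
                 - beta * (1 - lambda_w a b) * ln (b / b0))).

From Stdlib Require Import Reals Lra.
From Coquelicot Require Import Coquelicot.
Open Scope R_scope.

(* At pi_theta = pi_ref the margin inside the sigmoid vanishes, so the outer
   derivative is -(1 - sigmoid 0) = -1/2 for both partials.  In each partial the
   margin is (coefficient) * ln (x / x0), whose derivative at x0 is just
   coefficient / x0, because the derivative of the coefficient is multiplied by
   ln 1 = 0.  The coefficients at (a0, b0) are beta * lambda_w(a0, b0) and
   -beta * (1 - lambda_w(a0, b0)) = -beta * lambda_w(b0, a0), whose quotient
   is ln b0 / (- ln a0). *)

Lemma ln_lt_0 (x : R) : 0 < x < 1 -> ln x < 0.
Proof. intros [Hx0 Hx1]. rewrite <- ln_1. apply ln_increasing; lra. Qed.

Lemma sigmoid_0 : sigmoid 0 = 1 / 2.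
Proof. unfold sigmoid. rewrite Ropp_0, exp_0. reflexivity. Qed.

Lemma is_derive_neg_ln_sigmoid (t : R) :
  is_derive (fun t => - ln (sigmoid t)) t (- (1 - sigmoid t)).
Proof.
  pose proof (exp_pos (- t)).
  unfold sigmoid. auto_derive.
  - split; [lra|]. split; [|exact I].
    apply Rmult_lt_0_compat; [lra|]. apply Rinv_0_lt_compat. lra.
  - field. lra.
Qed.

Lemma is_derive_neg_ln_sigmoid_comp_root (g : R -> R) (x dg : R) :
  g x = 0 -> is_derive g x dg ->
  is_derive (fun x => - ln (sigmoid (g x))) x (- (1 / 2) * dg).
Proof.
  intros Hg0 Hg.
  replace (- (1 / 2) * dg) with (scal dg (- (1 - sigmoid (g x)))).
  - exact (is_derive_comp _ g x _ _ (is_derive_neg_ln_sigmoid (g x)) Hg).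
  - rewrite Hg0, sigmoid_0. change (dg * - (1 - 1 / 2) = - (1 / 2) * dg). field.
Qed.

Lemma ln_ratio_self (x : R) : 0 < x -> ln (x / x) = 0.
Proof. intros Hx. unfold Rdiv. rewrite Rinv_r by lra. exact ln_1. Qed.

Lemma is_derive_mul_ln_ratio (f : R -> R) (x0 : R) :
  0 < x0 -> ex_derive f x0 ->
  is_derive (fun x => f x * ln (x / x0)) x0 (f x0 / x0).
Proof.
  intros Hx0 Hf. destruct Hf as [df Hf].
  assert (Hln : is_derive (fun x => ln (x / x0)) x0 (/ x0)).
  { auto_derive.
    - rewrite Rinv_r; lra.
    - field. lra. }
  replace (f x0 / x0) with (plus (mult df (ln (x0 / x0))) (mult (f x0) (/ x0))).
  - exact (is_derive_mult f _ x0 df _ Hf Hln Rmult_comm).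
  - change (df * ln (x0 / x0) + f x0 * / x0 = f x0 / x0).
    rewrite ln_ratio_self, Rmult_0_r, Rplus_0_l by exact Hx0. reflexivity.
Qed.

Lemma ln_add_ln_neq_0 (a b : R) : 0 < a < 1 -> 0 < b < 1 -> ln a + ln b <> 0.
Proof. intros Ha Hb. pose proof (ln_lt_0 a Ha). pose proof (ln_lt_0 b Hb). lra. Qed.

Lemma lambda_w_gt_0 (a b : R) : 0 < a < 1 -> 0 < b < 1 -> 0 < lambda_w a b.
Proof.
  intros Ha Hb. pose proof (ln_lt_0 a Ha). pose proof (ln_lt_0 b Hb).
  apply Rdiv_neg_neg; lra.
Qed.

Lemma one_sub_lambda_w (a b : R) : ln a + ln b <> 0 -> 1 - lambda_w a b = lambda_w b a.
Proof. intros Hab. unfold lambda_w. rewrite (Rplus_comm (ln b)). field. exact Hab. Qed.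

Lemma ex_derive_lambda_w_l (a b : R) : 0 < a -> ln a + ln b <> 0 ->
  ex_derive (fun a => lambda_w a b) a.
Proof. intros Ha Hab. unfold lambda_w. auto_derive. tauto. Qed.

Lemma ex_derive_lambda_w_r (a b : R) : 0 < b -> ln a + ln b <> 0 ->
  ex_derive (fun b => lambda_w a b) b.
Proof. intros Hb Hab. unfold lambda_w. auto_derive. tauto. Qed.

Section BalancedDPO.

Variables beta a0 b0 : R.
Hypothesis Ha0 : 0 < a0 < 1.
Hypothesis Hb0 : 0 < b0 < 1.

Lemma is_derive_L_bdpo_l :
  is_derive (fun a => L_bdpo beta a0 b0 a b0) a0
    (- (1 / 2) * (beta * lambda_w a0 b0 / a0)).
Proof.
  set (g := fun a => beta * lambda_w a b0 * ln (a / a0)).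
  apply (is_derive_ext (fun a => - ln (sigmoid (g a)))).
  { intros a. unfold L_bdpo, g. rewrite (ln_ratio_self b0) by lra.
    now rewrite Rmult_0_r, Rminus_0_r. }
  apply is_derive_neg_ln_sigmoid_comp_root.
  - unfold g. rewrite ln_ratio_self by lra. ring.
  - apply (is_derive_mul_ln_ratio (fun a => beta * lambda_w a b0)); [lra|].
    apply ex_derive_scal, ex_derive_lambda_w_l; [lra | now apply ln_add_ln_neq_0].
Qed.

Lemma is_derive_L_bdpo_r :
  is_derive (fun b => L_bdpo beta a0 b0 a0 b) b0
    (- (1 / 2) * (- beta * (1 - lambda_w a0 b0) / b0)).
Proof.
  set (g := fun b => - beta * (1 - lambda_w a0 b) * ln (b / b0)).
  apply (is_derive_ext (fun b => - ln (sigmoid (g b)))).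
  { intros b. unfold L_bdpo, g. rewrite (ln_ratio_self a0) by lra.
    f_equal. f_equal. f_equal. ring. }
  apply is_derive_neg_ln_sigmoid_comp_root.
  - unfold g. rewrite ln_ratio_self by lra. ring.
  - apply (is_derive_mul_ln_ratio (fun b => - beta * (1 - lambda_w a0 b))); [lra|].
    apply (ex_derive_scal (fun b => 1 - lambda_w a0 b)).
    apply (ex_derive_minus (fun _ => 1) (fun b => lambda_w a0 b)); [apply ex_derive_const|].
    apply ex_derive_lambda_w_r; [lra | now apply ln_add_ln_neq_0].
Qed.

Lemma Derive_L_bdpo_l :
  Derive (fun a => L_bdpo beta a0 b0 a b0) a0
  = - (1 / 2) * (beta * lambda_w a0 b0 / a0).
Proof. apply is_derive_unique, is_derive_L_bdpo_l. Qed.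

Lemma Derive_L_bdpo_r :
  Derive (fun b => L_bdpo beta a0 b0 a0 b) b0
  = - (1 / 2) * (- beta * lambda_w b0 a0 / b0).
Proof.
  rewrite <- one_sub_lambda_w by now apply ln_add_ln_neq_0.
  apply is_derive_unique, is_derive_L_bdpo_r.
Qed.

End BalancedDPO.

Theorem proposition5p1 (beta a0 b0 : R) :
  0 < beta -> 0 < a0 < 1 -> 0 < b0 < 1 ->
  ex_derive (fun a => L_bdpo beta a0 b0 a b0) a0 /\
  ex_derive (fun b => L_bdpo beta a0 b0 a0 b) b0 /\
  Derive (fun b => L_bdpo beta a0 b0 a0 b) b0 <> 0 /\
  Derive (fun a => L_bdpo beta a0 b0 a b0) a0
    / Derive (fun b => L_bdpo beta a0 b0 a0 b) b0
  = - (b0 * ln b0) / (a0 * ln a0).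
Proof.
  intros Hbeta Ha0 Hb0.
  split; [eexists; exact (is_derive_L_bdpo_l beta a0 b0 Ha0 Hb0)|].
  split; [eexists; exact (is_derive_L_bdpo_r beta a0 b0 Ha0 Hb0)|].
  rewrite Derive_L_bdpo_l, Derive_L_bdpo_r by assumption.
  pose proof (lambda_w_gt_0 b0 a0 Hb0 Ha0) as Hlambda_l.
  split.
  - apply Rmult_integral_contrapositive_currified; [lra|].
    unfold Rdiv. apply Rmult_integral_contrapositive_currified; [nra|].
    apply Rinv_neq_0_compat. lra.
  - pose proof (ln_lt_0 a0 Ha0). pose proof (ln_lt_0 b0 Hb0).
    unfold lambda_w. field. repeat split; lra.
Qed.
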